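(* Let $A$ be a finite dimensional Hopf algebra over a field $k$ and let $M,L,N,P$ be Hopf bimodules over $A$. Let $f$ be a $p$-cocycle from $M$ to $L$, $g$ a $q$-cocycle from $L$ to $N$, and $h$ a $0$-cocycle from $N$ to $P$ (i.e. $h\in\mathrm{Hom}_{A-}^{-A}(N,P)$ with $Dh=0$) in the Hopf bimodule cohomology complexes. Then $(f\smile g)\smile h=f\smile(g\smile h)$.
   Context: $A$ is a finite dimensional Hopf algebra over a field $k$, with comultiplication $\Delta(x)=\sum x^{(1)}\otimes x^{(2)}$ and counit $\varepsilon$; $\Delta^{(u)}:A\to A^{\otimes u+1}$ is $\varepsilon$ for $u=-1$, the identity for $u=0$, and the iterated comultiplication otherwise. A Hopf bimodule is an $A$-bimodule and $A$-bicomodule (coactions $m\mapsto\sum m_{(-1)}\otimes m_{(0)}$, $m\mapsto\sum m_{(0)}\otimes m_{(1)}$) whose coactions are bimodule maps. For Hopf bimodules $M,N$, $\mathrm{Hom}_{A-}^{-A}(M\otimes A^{\otimes q},A^{\otimes p}\otimes N)$ denotes left $A$-module, right $A$-comodule maps, where $M\otimes A^{\otimes q}$ has the left action on $M$ and right coaction $m\otimes a_1\otimes\cdots\otimes a_q\mapsto\sum m_{(0)}\otimes a_1^{(1)}\otimes\cdots\otimes a_q^{(1)}\otimes m_{(1)}a_1^{(2)}\cdots a_q^{(2)}$, and $A^{\otimes p}\otimes N$ has diagonal left action and the right coaction of $N$. An $n$-cochain from $M$ to $N$ is an element of $\bigoplus_{t=0}^n\mathrm{Hom}_{A-}^{-A}(M\otimes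 A^{\otimes n-t},A^{\otimes t}\otimes N)$; cocycles are with respect to the total differential $D=d_h+d_c$ with $d_h\alpha(m\otimes a_1\otimes\cdots\otimes a_{q+1})=\alpha(ma_1\otimes\cdots\otimes a_{q+1})+\sum_{i=1}^q(-1)^i\alpha(m\otimes\cdots\otimes a_ia_{i+1}\otimes\cdots)+(-1)^{q+1}\alpha(m\otimes a_1\otimes\cdots\otimes a_q)a_{q+1}$ (diagonal right action on $A^{\otimes p}\otimes N$) and $d_c\alpha=(-1)^q[(\mathrm{id}_A\otimes\alpha)\circ\delta_L+\sum_{i=1}^p(-1)^i\Delta_i\circ\alpha+(-1)^{p+1}(\mathrm{id}_{A^{\otimes p}}\otimes\delta_L^N)\circ\alpha]$ (with $\delta_L(m\otimes a_1\otimes\cdots\otimes a_q)=\sum m_{(-1)}a_1^{(1)}\cdots a_q^{(1)}\otimes m_{(0)}\otimes a_1^{(2)}\otimes\cdots\otimes a_q^{(2)}$ and $\Delta_i$ applying $\Delta$ to the $i$-th factor). Cup product: for $f\in\mathrm{Hom}_{A-}^{-A}(M\otimes A^{\otimes p-s},A^{\otimes s}\otimes L)$ and $g\in\mathrm{Hom}_{A-}^{-A}(L\otimes A^{\otimes q-r},A^{\otimes r}\otimes N)$, with $n=p+q$, $t=s+r$, $(f\smile g)(m\otimes a_1\otimes\cdots\otimes a_{n-t})=\sum(-1)^{s(q-r)}(\mathrm{id}_{A^{\otimes s}}\otimes g)\big[f(m\otimes a_1\otimes\cdots\otimes a_{p-s})\cdot(\Delta^{(s-1)}(a^{(1)}_{p-s+1}\cdots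 a^{(1)}_{n-t})\otimes1)\otimes a^{(2)}_{p-s+1}\otimes\cdots\otimes a^{(2)}_{n-t}\big]$, where the $A^{\otimes s}$ factors are multiplied on the right componentwise; extended bilinearly to cochains. *)

From HB Require Import structures.
From mathcomp Require Import all_boot all_order all_algebra.
Set Implicit Arguments. Unset Strict Implicit. Unset Printing Implicit Defensive.
Import GRing.Theory.
Local Open Scope ring_scope.

(* A finite dimensional Hopf algebra over a field k is presented by a finite *)
(* basis (the finType hb) and the structure constants of its structure maps  *)
(* in that basis.  Elements of A (resp. A^{(x)n}) are coordinate vectors     *)
(* {ffun hb -> k} (resp. {ffun n.-tuple hb -> k}).                           *)

Record HopfData (k : fieldType) := {
  hb : finType;
  hmul : hb -> hb -> {ffun hb -> k};          (* e_i e_j = sum_l hmul i j l e_l *)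
  hunit : {ffun hb -> k};
  hcomul : hb -> {ffun hb * hb -> k};           (* Delta e_i = sum hcomul i (x,y) e_x (x) e_y *)
  hcounit : hb -> k;
  hanti : hb -> {ffun hb -> k}
}.
Arguments hb {k} h.
Arguments hmul {k} h _ _.
Arguments hunit {k} h.
Arguments hcomul {k} h _.
Arguments hcounit {k} h _.
Arguments hanti {k} h _.

Section HopfAlgebra.
Variables (k : fieldType) (A : HopfData k).
Local Notation I := (hb A).

Definition bvec (i : I) : {ffun I -> k} := [ffun j => (j == i)%:R].

Definition amul (a b : {ffun I -> k}) : {ffun I -> k} :=
  [ffun l => \sum_i \sum_j a i * b j * hmul A i j l].
Definition acomul (a : {ffun I -> k}) : {ffun I * I -> k} :=
  [ffun x => \sum_i a i * hcomul A i x].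
Definition aeps (a : {ffun I -> k}) : k := \sum_i a i * hcounit A i.
Definition aanti (a : {ffun I -> k}) : {ffun I -> k} :=
  [ffun l => \sum_i a i * hanti A i l].
Definition amul2 (x y : {ffun I * I -> k}) : {ffun I * I -> k} :=
  [ffun z => \sum_u \sum_v x u * y v * (hmul A u.1 v.1 z.1 * hmul A u.2 v.2 z.2)].
Definition tens2 (a b : {ffun I -> k}) : {ffun I * I -> k} :=
  [ffun x => a x.1 * b x.2].

Definition is_hopf : Prop :=
  [/\ (forall a b c, amul (amul a b) c = amul a (amul b c))
      /\ (forall a, amul (hunit A) a = a /\ amul a (hunit A) = a),
      (forall i x y z, \sum_u hcomul A i (u, z) * hcomul A u (x, y)
                     = \sum_v hcomul A i (x, v) * hcomul A v (y, z)),
      (forall i j, \sum_u hcomul A i (u, j) * hcounit A u = (i == j)%:R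
                /\ \sum_u hcomul A i (j, u) * hcounit A u = (i == j)%:R)
      /\
      ((forall a b, acomul (amul a b) = amul2 (acomul a) (acomul b))
        /\ acomul (hunit A) = tens2 (hunit A) (hunit A)),
      ((forall a b, aeps (amul a b) = aeps a * aeps b) /\ aeps (hunit A) = 1)
    &
      (forall i, [ffun l => \sum_x hcomul A i x * amul (hanti A x.1) (bvec x.2) l]
                   = [ffun l => hcounit A i * hunit A l]
              /\ [ffun l => \sum_x hcomul A i x * amul (bvec x.1) (hanti A x.2) l]
                   = [ffun l => hcounit A i * hunit A l])].

(* iterated comultiplication  Delta_n : A -> A^{(x)n};  Delta_0 = eps,
   Delta_1 = id, Delta_{n+2} = (id (x) Delta_{n+1}) o Delta.
   (In the paper's notation Delta_n = Delta^{(n-1)}.) *)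
Fixpoint Delta (n : nat) : I -> {ffun n.-tuple I -> k} :=
  match n return I -> {ffun n.-tuple I -> k} with
  | 0 => fun i => [ffun _ => hcounit A i]
  | n'.+1 =>
    match n' return (I -> {ffun n'.-tuple I -> k}) -> I -> {ffun n'.+1.-tuple I -> k} with
    | 0 => fun _ i => [ffun t => (thead t == i)%:R]
    | m.+1 => fun prev i =>
        [ffun t : m.+2.-tuple I => \sum_(x : I * I)
            hcomul A i x * (thead t == x.1)%:R * prev x.2 [tuple of behead t]]
    end (Delta n')
  end.

Definition prodL (l : seq I) : {ffun I -> k} :=
  foldr (fun x acc => amul (bvec x) acc) (hunit A) l.

(* Hopf bimodules: an arbitrary k-vector space with actions of the basis     *)
(* elements and coactions written in coordinates:                            *)
(*   delta_L m = sum_i e_i (x) lco m i,   delta_R m = sum_i rco m i (x) e_i   *)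
Record HBData := {
  hbm : lmodType k;
  lact : I -> hbm -> hbm;
  ract : hbm -> I -> hbm;
  lco : hbm -> {ffun I -> hbm};
  rco : hbm -> {ffun I -> hbm}
}.
Arguments lact : clear implicits.
Arguments ract : clear implicits.
Arguments lco : clear implicits.
Arguments rco : clear implicits.

Definition lacts (M : HBData) (a : {ffun I -> k}) (m : hbm M) : hbm M :=
  \sum_i a i *: lact M i m.
Definition racts (M : HBData) (m : hbm M) (a : {ffun I -> k}) : hbm M :=
  \sum_i a i *: ract M m i.

Arguments lacts : clear implicits.
Arguments racts : clear implicits.

Definition is_hbimod (M : HBData) : Prop :=
  [/\
      (forall i c m m', lact M i (c *: m + m') = c *: lact M i m + lact M i m'
                     /\ ract M (c *: m + m') i = c *: ract M m i + ract M m' i),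
      (forall c m m', lco M (c *: m + m') = c *: lco M m + lco M m'
                   /\ rco M (c *: m + m') = c *: rco M m + rco M m'),
      [/\ forall i j m, lact M i (lact M j m) = lacts M (amul (bvec i) (bvec j)) m,
          forall m, lacts M (hunit A) m = m,
          forall i j m, ract M (ract M m i) j = racts M m (amul (bvec i) (bvec j)),
          forall m, racts M m (hunit A) = m
        & forall i j m, lact M i (ract M m j) = ract M (lact M i m) j],
      [/\ forall m x y, \sum_u hcomul A u (x, y) *: lco M m u = lco M (lco M m x) y,
          forall m, \sum_u hcounit A u *: lco M m u = m,
          forall m x y, rco M (rco M m y) x = \sum_u hcomul A u (x, y) *: rco M m u,
          forall m, \sum_u hcounit A u *: rco M m u = m
        & forall m x y, lco M (rco M m y) x = rco M (lco M m x) y]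
    & (* the coactions are bimodule maps (diagonal structures on A(x)M, M(x)A) *)
      [/\ forall i m w, lco M (lact M i m) w
            = \sum_u \sum_xy (hcomul A i xy * hmul A xy.1 u w) *: lact M xy.2 (lco M m u),
          forall i m w, lco M (ract M m i) w
            = \sum_u \sum_xy (hcomul A i xy * hmul A u xy.1 w) *: ract M (lco M m u) xy.2,
          forall i m w, rco M (lact M i m) w
            = \sum_u \sum_xy (hcomul A i xy * hmul A xy.2 u w) *: lact M xy.1 (rco M m u)
        & forall i m w, rco M (ract M m i) w
            = \sum_u \sum_xy (hcomul A i xy * hmul A u xy.2 w) *: ract M (rco M m u) xy.1]].

(* A linear map  alpha : M (x) A^{(x)q} -> A^{(x)p} (x) N  is encoded by      *)
(*   alpha a m = coordinates of alpha(m (x) e_{a_1} (x) ... (x) e_{a_q})     *)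
(* in the basis e_b (b : p.-tuple) of A^{(x)p}: an element of {ffun _ -> N}. *)
Definition HomT (M N : HBData) (p q : nat) :=
  q.-tuple I -> hbm M -> {ffun p.-tuple I -> hbm N}.

Section Maps.
Variables (M N : HBData).

(* diagonal left / right action of e_i on A^{(x)p} (x) N *)
Definition la_tgt p (i : I) (X : {ffun p.-tuple I -> hbm N}) : {ffun p.-tuple I -> hbm N} :=
  [ffun w => \sum_(b : p.-tuple I) \sum_(c : p.+1.-tuple I)
     (Delta p.+1 i c * \prod_(j < p) hmul A (tnth c (widen_ord (leqnSn p) j)) (tnth b j) (tnth w j))
       *: lact N (tnth c ord_max) (X b)].
Definition ra_tgt p (X : {ffun p.-tuple I -> hbm N}) (i : I) : {ffun p.-tuple I -> hbm N} :=
  [ffun w => \sum_(b : p.-tuple I) \sum_(c : p.+1.-tuple I)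
     (Delta p.+1 i c * \prod_(j < p) hmul A (tnth b j) (tnth c (widen_ord (leqnSn p) j)) (tnth w j))
       *: ract N (X b) (tnth c ord_max)].

(* Hom_{A-}^{-A}(M (x) A^{(x)q}, A^{(x)p} (x) N) *)
Definition isHom p q (al : HomT M N p q) : Prop :=
  [/\
      forall a c m m', al a (c *: m + m') = c *: al a m + al a m',
      (* left A-linear (A acts on M only in the source, diagonally in the target) *)
      forall a i m, al a (lact M i m) = la_tgt i (al a m)
    & (* right A-colinear *)
      forall a m w z, rco N (al a m w) z
        = \sum_u \sum_(c : q.-tuple I) \sum_(d : q.-tuple I)
            ((\prod_(j < q) hcomul A (tnth a j) (tnth c j, tnth d j)) * prodL (u :: d) z)
              *: al c (rco M m u) w].

Definition tfirst q (a : q.+1.-tuple I) : q.-tuple I :=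
  [tuple tnth a (widen_ord (leqnSn q) j) | j < q].
Definition tlast q (a : q.+1.-tuple I) : I := tnth a ord_max.
Definition tmerge q (a : q.+1.-tuple I) (j : 'I_q) (c : I) : q.-tuple I :=
  [tuple (if (i < j)%N then tnth a (widen_ord (leqnSn q) i)
          else if i == j then c else tnth a (lift ord0 i)) | i < q].

Definition dh p q (al : HomT M N p q) : HomT M N p q.+1 :=
  fun a m =>
    al [tuple of behead a] (ract M m (thead a))
    + \sum_(j < q) ((-1) ^+ j.+1 *:
         \sum_c (amul (bvec (tnth a (widen_ord (leqnSn q) j))) (bvec (tnth a (lift ord0 j))) c)
                  *: al (tmerge a j c) m)
    + (-1) ^+ q.+1 *: ra_tgt (al (tfirst a) m) (tlast a).

Definition dc p q (al : HomT M N p q) : HomT M N p.+1 q :=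
  fun a m => (-1) ^+ q *: (
    (* (id_A (x) alpha) o delta_L *)
    [ffun w : p.+1.-tuple I => \sum_u \sum_(c : q.-tuple I) \sum_(d : q.-tuple I)
        ((\prod_(j < q) hcomul A (tnth a j) (tnth c j, tnth d j)) * prodL (u :: c) (thead w))
          *: al d (lco M m u) [tuple of behead w]]
    (* sum_i (-1)^i Delta_i o alpha *)
    + \sum_(j < p) ((-1) ^+ j.+1 *:
        [ffun w : p.+1.-tuple I => \sum_c
            hcomul A c (tnth w (widen_ord (leqnSn p) j), tnth w (lift ord0 j))
              *: al a m (tmerge w j c)])
    (* (-1)^{p+1} (id (x) delta_L^N) o alpha *)
    + (-1) ^+ p.+1 *: [ffun w : p.+1.-tuple I => lco N (al a m (tfirst w)) (tlast w)]).

Definition cochain := forall p q : nat, HomT M N p q.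

Definition is_cochain (n : nat) (c : cochain) : Prop :=
  forall p q, isHom (c p q) /\ (p + q != n -> forall a m, c p q a m = 0).

Definition D (c : cochain) : cochain :=
  fun p q a m =>
    (match q return HomT M N p q with
     | 0 => fun _ _ => 0
     | q'.+1 => dh (c p q') end) a m
  + (match p return HomT M N p q with
     | 0 => fun _ _ => 0
     | p'.+1 => dc (c p' q) end) a m.

Arguments D c p q : clear implicits.

Definition is_cocycle (n : nat) (c : cochain) : Prop :=
  is_cochain n c /\ forall p q a m, D c p q a m = 0.

End Maps.

Definition cup_basic (M L N : HBData) s u1 r u2
    (f : HomT M L s u1) (g : HomT L N r u2) : HomT M N (s + r) (u1 + u2) :=
  fun a m => [ffun z : (s + r).-tuple I =>
    (-1) ^+ (s * u2) *:
    \sum_(b : s.-tuple I) \sum_(c : u2.-tuple I) \sum_(d : u2.-tuple I) \sum_(t : s.-tuple I)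
      ((\prod_(j < u2) hcomul A (tnth a (rshift u1 j)) (tnth c j, tnth d j))
       * (\sum_x prodL c x * Delta s x t)
       * (\prod_(j < s) hmul A (tnth b j) (tnth t j) (tnth z (lshift r j))))
      *: g d (f [tuple tnth a (lshift u2 j) | j < u1] m b)
             [tuple tnth z (rshift s j) | j < r]].

Definition cup (M L N : HBData) (f : cochain M L) (g : cochain L N) : cochain M N :=
  fun p q a m => [ffun z : p.-tuple I =>
    \sum_(s < p.+1) \sum_(u < q.+1)
      cup_basic (f s u) (g (p - s)%N (q - u)%N)
        (tcast (esym (subnKC (leq_ord u))) a) m (tcast (esym (subnKC (leq_ord s))) z)].

End HopfAlgebra.

Arguments D {k A M N} c p q.
Arguments cup {k A M L N} f g p q.

From HB Require Import structures.
From mathcomp Require Import all_boot all_order all_algebra.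
From mathcomp Require Import zify.
Set Implicit Arguments. Unset Strict Implicit. Unset Printing Implicit Defensive.
Import GRing.Theory.
Local Open Scope ring_scope.

(** A 0-cochain [h] has a single non-zero component, in bidegree (0,0), where
  it is a k-linear map [N -> P].  In [X ⌣ h] only the summand in which [X]
  carries the whole bidegree survives, and there the cup product formula
  reduces to [h ∘ X]: the iterated coproduct of the unit is [1 ⊗ ... ⊗ 1], and
  [1 ⊗ ... ⊗ 1] acts trivially on the right of [A^⊗s].  Since [h ∘ -] is
  linear, it commutes with the outer cup product as well, so both
  [(f ⌣ g) ⌣ h] and [f ⌣ (g ⌣ h)] equal [h ∘ (f ⌣ g)].  No cocycle condition
  is needed. *)

Lemma sum_tuple0 (T : finType) (V : nmodType) (F : 0.-tuple T -> V) :
  \sum_t F t = F [tuple].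
Proof. by rewrite (big_only1 [tuple]) // => t; rewrite tuple0 eqxx. Qed.

Section HopfUnit.
Variables (k : fieldType) (A : HopfData k).
Hypothesis A_hopf : is_hopf A.
Local Notation I := (hb A).

Lemma sum_hunit_hmul (b z : I) : \sum_t hunit A t * hmul A b t z = (z == b)%:R.
Proof.
case: A_hopf => [[_ unitA] _ _ _ _].
have /(congr1 (fun a : {ffun I -> k} => a z)) := proj2 (unitA (bvec b)).
rewrite /amul /bvec !ffunE => <-; rewrite [RHS](bigD1 b) //= [X in _ + X]big1 => [|i /negbTE ib].
  by rewrite addr0; apply: eq_bigr => t _; rewrite ffunE eqxx mul1r.
by rewrite big1 // => t _; rewrite ffunE ib !mul0r.
Qed.

Lemma DeltaSS s i (t : s.+2.-tuple I) :
  Delta s.+2 i t = \sum_x hcomul A i x * (thead t == x.1)%:R * Delta s.+1 x.2 [tuple of behead t].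
Proof. by rewrite /= ffunE. Qed.

Lemma Delta_hunit s (t : s.-tuple I) :
  \sum_x hunit A x * Delta s x t = \prod_(j < s) hunit A (tnth t j).
Proof.
case: A_hopf => [_ _ [_ [_ comul_unit]] [_ eps_unit] _].
case: s t => [|s] t.
  by rewrite big_ord0 -eps_unit; apply: eq_bigr => i _; rewrite ffunE.
elim: s t => [|s IHs] t.
  rewrite big_ord1 (big_only1 (thead t)) // ?ffunE ?eqxx ?mulr1 // => i ti _.
  by rewrite ffunE eq_sym (negbTE ti) mulr0.
have comul_unit_t y : acomul (hunit A) y = hunit A y.1 * hunit A y.2.
  by rewrite comul_unit ffunE.
transitivity (\sum_(y : I * I) acomul (hunit A) y * (thead t == y.1)%:R
                                 * Delta s.+1 y.2 [tuple of behead t]).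
  under eq_bigr do rewrite DeltaSS big_distrr.
  rewrite exchange_big; apply: eq_bigr => y _.
  by rewrite ffunE !big_distrl /=; apply: eq_bigr => i _; rewrite !mulrA.
under eq_bigr do rewrite comul_unit_t.
rewrite -(pair_bigA _ (fun i j => hunit A i * hunit A j * (thead t == i)%:R
                                   * Delta s.+1 j [tuple of behead t])) /=.
rewrite (big_only1 (thead t)) // => [|i ti _]; last first.
  by rewrite big1 // => j _; rewrite eq_sym (negbTE ti) mulr0 mul0r.
under eq_bigr do rewrite eqxx mulr1 -mulrA.
rewrite -big_distrr IHs [RHS]big_ord_recl; congr (_ * _); apply: eq_bigr => j _.
by rewrite tnth_behead; congr (hunit A (tnth t _)); apply: val_inj; rewrite /= inordK // ltnS.
Qed.

Lemma sum_prod_hunit_hmul s (b w : s.-tuple I) :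
  \sum_(t : s.-tuple I) (\prod_(j < s) hunit A (tnth t j))
      * \prod_(j < s) hmul A (tnth b j) (tnth t j) (tnth w j)
  = (w == b)%:R.
Proof.
transitivity (\prod_(j < s) \sum_y hunit A y * hmul A (tnth b j) y (tnth w j)).
  rewrite bigA_distr_bigA /= (reindex (fun f : {ffun 'I_s -> I} => [tuple f j | j < s])).
    by apply: eq_bigr => f _; rewrite -big_split; apply: eq_bigr => j _; rewrite tnth_mktuple.
  exists (fun t : s.-tuple I => [ffun j => tnth t j]) => [f _|t _].
    by apply/ffunP => j; rewrite ffunE tnth_mktuple.
  by apply: eq_from_tnth => j; rewrite tnth_mktuple ffunE.
under eq_bigr do rewrite sum_hunit_hmul.
have [->|wb] := eqVneq w b; first by rewrite big1 // => j _; rewrite eqxx.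
have [j wbj] : exists j, tnth w j != tnth b j.
  apply/existsP; apply: contraNT wb => /existsPn wb.
  by apply/eqP/eq_from_tnth => j; apply/eqP/negPn.
by rewrite (bigD1 j) //= (negbTE wbj) mul0r.
Qed.

End HopfUnit.

Section ZeroCochain.
Variables (k : fieldType) (A : HopfData k) (N P : HBData A) (h : cochain N P).
Hypotheses (A_hopf : is_hopf A) (h_cochain : is_cochain 0 h).

Definition cochain0_map (w : hbm N) : hbm P := @h 0 0 [tuple] w [tuple].

Lemma cochain0_map_linear : linear cochain0_map.
Proof.
by move=> c w w'; case: (h_cochain 0 0) => [[h_lin _ _] _]; rewrite /cochain0_map h_lin !ffunE.
Qed.

HB.instance Definition _ :=
  GRing.isLinear.Build k (hbm N) (hbm P) _ cochain0_map cochain0_map_linear.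

Lemma cochain0_eq0 r u a w z : (r + u != 0)%N -> @h r u a w z = 0.
Proof. by move=> ru0; case: (h_cochain r u) => _ /(_ ru0 a w) ->; rewrite ffunE. Qed.

Lemma cup_basic_cochain0r (M : HBData A) s u1 r u2 (X : HomT M N s u1) a m z :
  cup_basic X (@h r u2) a m z =
    if (r + u2 == 0)%N then
      cochain0_map (X [tuple tnth a (lshift u2 j) | j < u1] m
                      [tuple tnth z (lshift r j) | j < s])
    else 0.
Proof.
rewrite /cup_basic ffunE; case: eqP => [|/eqP ru0]; last first.
  rewrite big1 ?scaler0 // => b _; rewrite big1 // => c _; rewrite big1 // => d _.
  by rewrite big1 // => t _; rewrite cochain0_eq0 ?scaler0.
case: r z => [|//] z; case: u2 a => [|//] a _.
rewrite muln0 expr0 scale1r.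
set a' := [tuple tnth a (lshift 0 j) | j < u1].
set z' := [tuple tnth z (lshift 0 j) | j < s].
rewrite (eq_bigr (fun b => (z' == b)%:R *: cochain0_map (X a' m b))) => [|b _].
  rewrite (big_only1 z') ?eqxx ?scale1r // => b zb _.
  by rewrite eq_sym (negbTE zb) scale0r.
rewrite !sum_tuple0 -scaler_suml (tuple0 [tuple tnth z (rshift s j) | j < 0]).
congr (_ *: _); rewrite -(sum_prod_hunit_hmul A_hopf b z').
apply: eq_bigr => t _; rewrite big_ord0 mul1r Delta_hunit //.
by congr (_ * _); apply: eq_bigr => j _; rewrite tnth_mktuple.
Qed.

Lemma cup_cochain0r (M : HBData A) (X : cochain M N) r v a m z :
  cup X h r v a m z = cochain0_map (X r v a m z).
Proof.
rewrite /cup ffunE (big_only1 ord_max) // => [|s s_r _]; last first.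
  rewrite big1 // => u _; rewrite cup_basic_cochain0r ifF //.
  by move: s_r; rewrite -(inj_eq val_inj) /=; have := ltn_ord s; lia.
rewrite (big_only1 ord_max) // => [|u u_v _]; last first.
  rewrite cup_basic_cochain0r ifF //.
  by move: u_v; rewrite -(inj_eq val_inj) /=; have := ltn_ord u; lia.
rewrite cup_basic_cochain0r ifT ?subnn //.
by congr (cochain0_map (X r v _ m _)); apply: eq_from_tnth => j;
  rewrite tnth_mktuple tcastE; congr tnth; apply: val_inj.
Qed.

Lemma cup_basic_cup_cochain0r (M L : HBData A) (g : cochain L N) s u r v
    (F : HomT M L s u) a m z :
  cup_basic F (cup g h r v) a m z = cochain0_map (cup_basic F (g r v) a m z).
Proof.
rewrite /cup_basic !ffunE linearZ; congr (_ *: _).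
rewrite [RHS]linear_sum; apply: eq_bigr => b _.
rewrite [RHS]linear_sum; apply: eq_bigr => c _.
rewrite [RHS]linear_sum; apply: eq_bigr => d _.
rewrite [RHS]linear_sum; apply: eq_bigr => t _.
by rewrite linearZ cup_cochain0r.
Qed.

Lemma cup_cup_cochain0r (M L : HBData A) (f : cochain M L) (g : cochain L N) p q a m z :
  cup f (cup g h) p q a m z = cochain0_map (cup f g p q a m z).
Proof.
rewrite {1}/cup [in RHS]/cup !ffunE [RHS]linear_sum; apply: eq_bigr => s _.
by rewrite [RHS]linear_sum; apply: eq_bigr => u _; rewrite cup_basic_cup_cochain0r.
Qed.

End ZeroCochain.

Theorem mainTheorem5 (k : fieldType) (A : HopfData k) (M L N P : HBData A)
  (p q : nat) (f : cochain M L) (g : cochain L N) (h : cochain N P) :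
  is_hopf A -> is_hbimod M -> is_hbimod L -> is_hbimod N -> is_hbimod P ->
  is_cocycle p f -> is_cocycle q g -> is_cocycle 0 h ->
  forall a b x m, cup (cup f g) h a b x m = cup f (cup g h) a b x m.
Proof.
move=> A_hopf _ _ _ _ _ _ [h_cochain _] a b x m; apply/ffunP => z.
by rewrite cup_cochain0r // cup_cup_cochain0r.
Qed.
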